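(* Let $\epsilon\in(0,1)$, let $x:\mathcal{A}\to(0,1)$ be given, and put $\gamma:=\frac{\log_2 M}{\epsilon}$. Let $T$ be a table and $C_T$ the event-log of Algorithm 2 on $T$. If a partial witness tree of weight at least $\gamma$, all of whose non-root vertices $v$ satisfy $x'([v])\ge\frac{1}{4m}$, occurs in $C_T$, then a partial witness tree of weight in $[\gamma,2\gamma]$ occurs in $C_T$.
   Context: Setting: $\mathcal{P}=\{P_1,\dots,P_n\}$ is a finite set of mutually independent discrete random variables with finite domains; $\mathcal{A}$ is a set of $m$ events determined by them; $\mathrm{vbl}(A)$ is the minimal set of variables determining $A$; the dependency graph joins $A\neq B$ iff $\mathrm{vbl}(A)\cap\mathrm{vbl}(B)\neq\emptyset$; $\Gamma(A)$ is the neighborhood and $\Gamma^+(A)=\Gamma(A)\cup\{A\}$. $x'(A)=x(A)\prod_{B\in\Gamma(A)}(1-x(B))$; $\overline{\mathcal{A}}=\{A: x'(A)\ge\frac{1}{4m}\}$; $M=\max\{n,4m,4\sum_{A\in\overline{\mathcal{A}}}\frac{2|\mathrm{vbl}(A)|}{x'(A)}\cdot\frac{x(A)}{1-x(A)}\}$. Binary trees: for each $A$ a rooted binary tree $\mathbb{B}_A$ is fixed, with vertices labeled by nonempty subsets of $\mathrm{vbl}(A)$: root labeled $\mathrm{vbl}(A)$, leaves labeled by singletons, each non-leaf vertex has two children with disjoint labels whose union is its label; $\mathbb{B}_A$ also denotes the set of labels. Partial witness tree: finite rooted tree, root labeled by some $S\in\mathbb{B}_A$ ($A\in\mathcal{A}$),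 other vertices labeled by events; children of the root are labeled by events $B$ with $\mathrm{vbl}(B)\cap S\ne\emptyset$; children of a non-root vertex labeled $B$ are labeled by elements of $\Gamma^+(B)$. $[v]$ denotes the label of a non-root vertex $v$. The weight of an event is $w(A)=-\log_2x'(A)$ and the weight of a partial witness tree is the sum of $w([v])$ over its non-root vertices $v$. Table and log: $T$ gives for each variable $p$ a sequence $T(p,1),T(p,2),\dots$ of values. Algorithm 2: pointers $t_p=1$; while some event happens under $p=T(p,t_p)$ for all $p$, pick one such event $A$ by a fixed deterministic rule and increment $t_p$ for all $p\in\mathrm{vbl}(A)$. The event-log $C_T(1),C_T(2),\dots$ lists the picked events. For a log $C$, step $t$ and $S\in\mathbb{B}_{C(t)}$, $\tau_C(t,S)$ is built by starting with a root labeled $S$ and, for $i=t-1,\dots,1$: if some non-root vertex $v$ has $C(i)\in\Gamma^+([v])$, attach a child labeled $C(i)$ to such a $v$ of maximum depth (ties arbitrary); else if $S\cap\mathrm{vbl}(C(i))\ne\emptyset$, attach a child labeled $C(i)$ to the root; else do nothing. A partial witness tree $\tau_S$ occurs in $C$ if $\tau_S=\tau_C(t,S)$ for some $t$ with $S\in\mathbb{B}_{C(t)}$. *)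

From HB Require Import structures.
From mathcomp Require Import all_boot all_order all_algebra.
From mathcomp Require Import reals exp.
Set Implicit Arguments. Unset Strict Implicit. Unset Printing Implicit Defensive.
Import Order.TTheory GRing.Theory Num.Theory.
Local Open Scope ring_scope.

Definition determines (n : nat) (D : 'I_n -> finType)
  (S : {set 'I_n}) (E : (forall p, D p) -> bool) : Prop :=
  forall a b : (forall p, D p), (forall p, p \in S -> a p = b p) -> E a = E b.

Definition is_vbl (n m : nat) (D : 'I_n -> finType)
  (A : 'I_m -> (forall p, D p) -> bool) (vbl : 'I_m -> {set 'I_n}) (i : 'I_m) : Prop :=
  determines (vbl i) (A i) /\
  (forall S : {set 'I_n}, S \subset vbl i -> determines S (A i) -> S = vbl i).

Definition Gamma (n m : nat) (vbl : 'I_m -> {set 'I_n}) (i : 'I_m) : {set 'I_m} :=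
  [set j | (j != i) && (vbl i :&: vbl j != set0)].
Definition GammaP (n m : nat) (vbl : 'I_m -> {set 'I_n}) (i : 'I_m) : {set 'I_m} :=
  i |: Gamma vbl i.

Definition log2 (R : realType) (y : R) : R := ln y / ln 2.

Definition xp (R : realType) (n m : nat) (vbl : 'I_m -> {set 'I_n}) (x : 'I_m -> R)
  (i : 'I_m) : R := x i * \prod_(j in Gamma vbl i) (1 - x j).

Definition wgt (R : realType) (n m : nat) (vbl : 'I_m -> {set 'I_n}) (x : 'I_m -> R)
  (i : 'I_m) : R := - log2 (xp vbl x i).

Definition in_bar (R : realType) (n m : nat) (vbl : 'I_m -> {set 'I_n}) (x : 'I_m -> R)
  (i : 'I_m) : bool := (4 * m)%:R^-1 <= xp vbl x i.

Definition Mconst (R : realType) (n m : nat) (vbl : 'I_m -> {set 'I_n}) (x : 'I_m -> R) : R :=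
  Num.max (Num.max (n%:R) ((4 * m)%:R))
    (4 * \sum_(i < m | in_bar vbl x i)
          ((2 * #|vbl i|%:R / xp vbl x i) * (x i / (1 - x i)))).

Inductive btree (n : nat) := BLeaf of 'I_n | BNode of btree n & btree n.

Fixpoint blabel (n : nat) (b : btree n) : {set 'I_n} :=
  match b with BLeaf p => [set p] | BNode l r => blabel l :|: blabel r end.

(* leaves are singletons (by construction); children of a node have disjoint
   labels whose union is the node's label *)
Fixpoint bvalid (n : nat) (b : btree n) : bool :=
  match b with
  | BLeaf _ => true
  | BNode l r => [disjoint blabel l & blabel r] && bvalid l && bvalid r
  end.

Fixpoint blabels (n : nat) (b : btree n) : seq {set 'I_n} :=
  blabel b :: match b with BLeaf _ => [::] | BNode l r => blabels l ++ blabels r end.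

(* non-root vertices: labeled by events; a partial witness tree is a pair
   (root label S, list of subtrees hanging from the root) *)
Inductive etree (m : nat) := ENode of 'I_m & seq (etree m).

Definition label (m : nat) (t : etree m) : 'I_m := let: ENode l _ := t in l.

Definition pwt (n m : nat) := ({set 'I_n} * seq (etree m))%type.

(* all vertices of a tree, with their path (sequence of child indices) *)
Fixpoint vtree (m : nat) (t : etree m) : seq (seq nat * 'I_m) :=
  match t with
  | ENode l ch =>
      ([::], l) ::
      (fix vf (j : nat) (cs : seq (etree m)) :=
         match cs with
         | [::] => [::]
         | c :: cs' => [seq (j :: q.1, q.2) | q <- vtree c] ++ vf j.+1 cs'
         end) 0%N ch
  end.

Fixpoint vforest_from (m : nat) (j : nat) (ts : seq (etree m)) : seq (seq nat * 'I_m) :=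
  match ts with
  | [::] => [::]
  | c :: cs => [seq (j :: q.1, q.2) | q <- vtree c] ++ vforest_from j.+1 cs
  end.

(* non-root vertices of a partial witness tree with children ts of the root;
   the path of a vertex has length equal to its depth *)
Definition vforest (m : nat) (ts : seq (etree m)) := vforest_from 0%N ts.

Fixpoint wf_tree (n m : nat) (vbl : 'I_m -> {set 'I_n}) (t : etree m) : bool :=
  match t with
  | ENode l ch => all (fun c => label c \in GammaP vbl l) ch && all (wf_tree vbl) ch
  end.

Definition is_pwt (n m : nat) (vbl : 'I_m -> {set 'I_n}) (Bt : 'I_m -> btree n)
  (tau : pwt n m) : Prop :=
  (exists a : 'I_m, tau.1 \in blabels (Bt a)) /\
  all (fun c => vbl (label c) :&: tau.1 != set0) tau.2 /\
  all (wf_tree vbl) tau.2.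

Definition weight (R : realType) (n m : nat) (vbl : 'I_m -> {set 'I_n}) (x : 'I_m -> R)
  (tau : pwt n m) : R := \sum_(q <- vforest tau.2) wgt vbl x q.2.

Definition all_bar (R : realType) (n m : nat) (vbl : 'I_m -> {set 'I_n}) (x : 'I_m -> R)
  (tau : pwt n m) : bool := all (fun q => in_bar vbl x q.2) (vforest tau.2).

(* add a child labeled e at the end of the children list of the vertex at path p
   (p = [::] is the root) *)
Fixpoint add_forest (m : nat) (e : 'I_m) (p : seq nat) (ts : seq (etree m))
  : seq (etree m) :=
  match p with
  | [::] => rcons ts (ENode e [::])
  | k :: p' =>
      [seq (let: (j, t) := jt in
            if j == k then (let: ENode l ch := t in ENode l (add_forest e p' ch)) else t)
      | jt <- zip (iota 0 (size ts)) ts]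
  end.

(* one step i of the construction of tau_C(t,S), with C(i) = e; ties are
   arbitrary, hence this is a relation *)
Definition attach (n m : nat) (vbl : 'I_m -> {set 'I_n}) (S : {set 'I_n}) (e : 'I_m)
  (ts ts' : seq (etree m)) : Prop :=
  let cand := [seq q <- vforest ts | e \in GammaP vbl q.2] in
  if cand != [::] then
    exists q, q \in cand /\ (forall q', q' \in cand -> (size q'.1 <= size q.1)%N) /\
              ts' = add_forest e q.1 ts
  else if vbl e :&: S != set0 then ts' = add_forest e [::] ts
  else ts' = ts.

Fixpoint process (n m : nat) (vbl : 'I_m -> {set 'I_n}) (S : {set 'I_n})
  (L : seq 'I_m) (ts res : seq (etree m)) : Prop :=
  match L with
  | [::] => res = ts
  | e :: L' => exists ts', attach vbl S e ts ts' /\ process vbl S L' ts' res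
  end.

(* table T : T p j is the j-th value (j >= 1) for variable p; pointer states s *)
Definition asg (n : nat) (D : 'I_n -> finType) (T : forall p : 'I_n, nat -> D p)
  (s : 'I_n -> nat) : forall p, D p := fun p => T p (s p).

(* the deterministic selection rule, as a function of the current pointer state:
   it returns None iff no event happens, and otherwise an event that happens *)
Definition rule_spec (n m : nat) (D : 'I_n -> finType) (A : 'I_m -> (forall p, D p) -> bool)
  (T : forall p : 'I_n, nat -> D p) (rule : ('I_n -> nat) -> option 'I_m) : Prop :=
  forall s, (rule s = None <-> (forall i, ~~ A i (asg T s))) /\
            (forall i, rule s = Some i -> A i (asg T s)).

(* pointer state after k iterations (None if the algorithm stopped earlier) *)
Fixpoint alg_state (n m : nat) (vbl : 'I_m -> {set 'I_n})
  (rule : ('I_n -> nat) -> option 'I_m) (k : nat) : option ('I_n -> nat) :=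
  match k with
  | 0 => Some (fun _ => 1%N)
  | k'.+1 =>
      match alg_state vbl rule k' with
      | None => None
      | Some s => match rule s with
                  | None => None
                  | Some i => Some (fun p => if p \in vbl i then (s p).+1 else s p)
                  end
      end
  end.

(* event-log: C t (t >= 1) is the event picked at iteration t, None if no such step *)
Definition event_log (n m : nat) (vbl : 'I_m -> {set 'I_n})
  (rule : ('I_n -> nat) -> option 'I_m) (t : nat) : option 'I_m :=
  match t with
  | 0 => None
  | t'.+1 => obind rule (alg_state vbl rule t')
  end.

(* tau occurs in the log C : tau = tau_C(t,S) for some t with S in B_{C(t)}
   (for some resolution of the ties) *)
Definition occurs (n m : nat) (vbl : 'I_m -> {set 'I_n}) (Bt : 'I_m -> btree n)
  (C : nat -> option 'I_m) (tau : pwt n m) : Prop :=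
  exists (t : nat) (a : 'I_m),
    C t = Some a /\ tau.1 \in blabels (Bt a) /\
    process vbl tau.1 (pmap C (rev (iota 1 t.-1))) [::] tau.2.

From mathcomp Require Import all_boot all_order all_algebra.
From mathcomp Require Import reals exp lra.
Import Order.TTheory GRing.Theory Num.Theory.
Set Implicit Arguments. Unset Strict Implicit. Unset Printing Implicit Defensive.

(* Whatever way ties are broken, the non-root labels of tau_C(t, S) form, as a
   multiset, the list of events of C(t-1), ..., C(1) that meet S or lie in
   Gamma^+ of an event attached before them; so weights may be computed on these
   lists.  Take an occurring tree of weight >= gamma with root S in B_a whose
   labels all have weight <= log2 M <= gamma, and descend while the weight
   exceeds 2 gamma.  At an inner vertex S = S1 :|: S2 of B_a the weight is
   subadditive, so one child still weighs >= gamma.  At a leaf S = {p}, the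
   latest earlier event a' containing p is the only child of the root and
   tau_C(t', vbl a') hangs below it, so passing to the root vbl a' of B_a' at the
   earlier time t' loses only w(a') <= gamma. *)

Lemma exists_argmax (T : eqType) (s : seq T) (f : T -> nat) : s != [::] ->
  exists2 q, q \in s & forall q', q' \in s -> (f q' <= f q)%N.
Proof.
elim: s => // a s IH _; case: (altP (s =P [::])) => [-> | /IH [q Hq Hmax]].
  by exists a => [|q']; rewrite ?mem_head // inE => /eqP ->.
have [Haq | Hqa] := leqP (f a) (f q).
  by exists q => [|q']; rewrite inE ?Hq ?orbT // => /orP [/eqP -> // | /Hmax].
exists a => [|q']; rewrite ?mem_head // inE => /orP [/eqP -> // | /Hmax Hq'].
exact: leq_trans Hq' (ltnW Hqa).
Qed.

Lemma setI_neq0S (T : finType) (A B C : {set T}) :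
  B \subset C -> A :&: B != set0 -> A :&: C != set0.
Proof. by move=> HS; apply: contraNN; rewrite -!subset0 => /(subset_trans (setIS _ HS)). Qed.

Lemma setI_set1_neq0 (T : finType) (A : {set T}) x : (A :&: [set x] != set0) = (x \in A).
Proof. by rewrite setI_eq0 disjoint_sym disjoints1 negbK. Qed.

Lemma map_update_out (T : Type) (g : T -> T) k j (cs : seq T) : (k < j)%N ->
  [seq (let: (i, t) := it in if i == k then g t else t) | it <- zip (iota j (size cs)) cs]
  = cs.
Proof. by elim: cs j => //= c cs IH j Hj; rewrite (gtn_eqF Hj) IH // ltnW. Qed.

Lemma map_update_cat (T : Type) (g : T -> T) j (A : seq T) t D :
  [seq (let: (i, u) := iu in if i == j + size A then g u else u)
  | iu <- zip (iota j (size (A ++ t :: D))) (A ++ t :: D)] = A ++ g t :: D.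
Proof.
elim: A j => [|c A IH] j /=; first by rewrite addn0 eqxx map_update_out.
rewrite -addSnnS IH (_ : (j == _) = false) //.
by apply/negbTE; rewrite neq_ltn ltnS leq_addr.
Qed.

Section WitnessForests.
Variables (n m : nat) (vbl : 'I_m -> {set 'I_n}).

Definition forest_labels (ts : seq (etree m)) : seq 'I_m := map snd (vforest ts).

Definition add_tree (e : 'I_m) (p : seq nat) (t : etree m) : etree m :=
  let: ENode l ch := t in ENode l (add_forest e p ch).

Lemma vtree_ENode l (ch : seq (etree m)) : vtree (ENode l ch) = ([::], l) :: vforest ch.
Proof. by rewrite /= /vforest; congr (_ :: _); elim: ch 0%N => //= c ch IH j; rewrite IH. Qed.

Lemma labels_vforest_from j (ts : seq (etree m)) :
  map snd (vforest_from j ts) = forest_labels ts.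
Proof.
rewrite /forest_labels /vforest.
by elim: ts j => //= c cs IH j; rewrite !map_cat -!map_comp IH (IH 1%N).
Qed.

Lemma forest_labels_cons (c : etree m) cs :
  forest_labels (c :: cs) = map snd (vtree c) ++ forest_labels cs.
Proof. by rewrite {1}/forest_labels /= map_cat -map_comp labels_vforest_from. Qed.

Lemma forest_labels_cat (A B : seq (etree m)) :
  forest_labels (A ++ B) = forest_labels A ++ forest_labels B.
Proof. by elim: A => //= c A IH; rewrite !forest_labels_cons IH catA. Qed.

Lemma labels_vtree l (ch : seq (etree m)) :
  map snd (vtree (ENode l ch)) = l :: forest_labels ch.
Proof. by rewrite vtree_ENode. Qed.

Lemma root_notin_vforest_from j (ts : seq (etree m)) l : ([::], l) \notin vforest_from j ts.
Proof.
elim: ts j => //= c cs IH j.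
by rewrite mem_cat negb_or IH andbT; apply/mapP => -[].
Qed.

Lemma vforest_from_split j (ts : seq (etree m)) k p l :
  (k :: p, l) \in vforest_from j ts ->
  exists A t D, [/\ ts = A ++ t :: D, k = j + size A & (p, l) \in vtree t].
Proof.
elim: ts j => //= c cs IH j; rewrite mem_cat => /orP [/mapP [[p' l'] Hv [-> -> ->]]|].
  by exists [::], c, cs; rewrite addn0.
by case/IH => A [t [D [-> -> Hv]]]; exists (c :: A), t, D; rewrite addSnnS.
Qed.

Lemma add_forest_cat e p (A : seq (etree m)) t D :
  add_forest e (size A :: p) (A ++ t :: D) = A ++ add_tree e p t :: D.
Proof. by rewrite /= -[size A]add0n map_update_cat. Qed.

Lemma root_labels_add_forest e k p (ts : seq (etree m)) :
  map (@label m) (add_forest e (k :: p) ts) = map (@label m) ts.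
Proof.
rewrite /= -map_comp -[in RHS](@unzip2_zip _ _ (iota 0 (size ts)) ts) ?size_iota //.
by rewrite /unzip2 -map_comp; apply: eq_map => -[i [l ch]] /=; case: (i == k).
Qed.

Lemma all_label_add_forest (P : pred 'I_m) e k p (ts : seq (etree m)) :
  all (fun c => P (label c)) (add_forest e (k :: p) ts) = all (fun c => P (label c)) ts.
Proof. by rewrite -!(all_map (@label m) P) root_labels_add_forest. Qed.

(* [r] is a dummy root label: the hypothesis says that [p] addresses the root or
   a vertex of [ts]. *)
Lemma perm_labels_add_forest e p r (ts : seq (etree m)) l :
  (p, l) \in vtree (ENode r ts) ->
  perm_eq (forest_labels (add_forest e p ts)) (e :: forest_labels ts).
Proof.
elim: p r ts l => [|k p IH] r ts l.
  by rewrite /= -cats1 forest_labels_cat forest_labels_cons /= cats1 perm_rcons.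
rewrite vtree_ENode in_cons => /orP [/eqP [] //|].
case/vforest_from_split=> A [[l0 ch] [D [-> -> Hv]]].
rewrite add0n add_forest_cat !forest_labels_cat !forest_labels_cons !labels_vtree.
rewrite perm_sym -cat1s perm_catCA perm_cat2l catA perm_cat2r /=.
by rewrite (perm_catCA [:: e] [:: l0]) perm_cons perm_sym (IH _ _ _ Hv).
Qed.

Lemma wf_add_forest e p (ts : seq (etree m)) l :
  (p, l) \in vforest ts -> e \in GammaP vbl l ->
  all (wf_tree vbl) ts -> all (wf_tree vbl) (add_forest e p ts).
Proof.
elim: p ts l => [|k p IH] ts l; first by rewrite (negbTE (root_notin_vforest_from _ _ _)).
case/vforest_from_split=> A [[l0 ch] [D [-> -> Hv]]] He.
rewrite add0n add_forest_cat !all_cat /= => /and3P [-> /andP [Hl0 Hch] ->].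
rewrite andbT /=; move: Hv; rewrite vtree_ENode in_cons; case: p IH => [|k' p] IH.
  case/orP=> [/eqP [Hl] | Hv]; last by case: (negP (root_notin_vforest_from 0 ch l) Hv).
  by rewrite /= !all_rcons Hl0 Hch -Hl He.
move=> /= Hv; rewrite (IH _ _ Hv He Hch) andbT.
by rewrite (all_label_add_forest (mem (GammaP vbl l0))).
Qed.

(* [X] holds the labels already present in the tree. *)
Fixpoint attached (S : {set 'I_n}) (X L : seq 'I_m) : seq 'I_m :=
  if L is e :: L' then
    if has (fun l => e \in GammaP vbl l) X || (vbl e :&: S != set0)
    then e :: attached S (e :: X) L' else attached S X L'
  else [::].

Lemma eq_attached S X Y L : X =i Y -> attached S X L = attached S Y L.
Proof.
elim: L X Y => //= e L IH X Y HXY; rewrite (eq_has_r HXY); case: ifP => _; last exact: IH.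
by congr (_ :: _); apply: IH => z; rewrite !in_cons HXY.
Qed.

Lemma has_attach_candidate e (ts : seq (etree m)) :
  ([seq q <- vforest ts | e \in GammaP vbl q.2] != [::]) =
  has (fun l => e \in GammaP vbl l) (forest_labels ts).
Proof. by rewrite /forest_labels has_map -has_filter. Qed.

Lemma perm_process_labels S L ts res : process vbl S L ts res ->
  perm_eq (forest_labels res) (forest_labels ts ++ attached S (forest_labels ts) L).
Proof.
elim: L ts => [|e L IH] ts /=; first by move=> ->; rewrite cats0.
move=> [ts' [Hat /IH Hres]]; move: Hat; rewrite /attach has_attach_candidate.
have step ts'' : perm_eq (forest_labels ts'') (e :: forest_labels ts) ->
    perm_eq (forest_labels res) (forest_labels ts'' ++ attached S (forest_labels ts'') L) ->
    perm_eq (forest_labels res)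
      (forest_labels ts ++ e :: attached S (e :: forest_labels ts) L).
  move=> Hp /perm_trans; apply; rewrite (eq_attached _ _ (perm_mem Hp)).
  by rewrite perm_sym (perm_catCA _ [:: e]) /= -cat_cons perm_cat2r perm_sym.
case: ifP => Hc.
  move=> [[p l] [Hq [_ Ets']]]; rewrite orTb; apply: step Hres.
  rewrite Ets' (perm_labels_add_forest _ (r := e) (l := l)) //.
  by rewrite vtree_ENode in_cons; move: Hq; rewrite mem_filter => /andP [_ ->]; rewrite orbT.
case: ifP => _ Ets'; rewrite Ets' in Hres => //.
by apply: step Hres; exact: (perm_labels_add_forest _ (r := e) (mem_head _ _)).
Qed.

Lemma process_wf S L ts res : process vbl S L ts res ->
  all (fun c => vbl (label c) :&: S != set0) ts -> all (wf_tree vbl) ts ->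
  all (fun c => vbl (label c) :&: S != set0) res /\ all (wf_tree vbl) res.
Proof.
elim: L ts => [|e L IH] ts /=; first by move=> ->.
move=> [ts' [Hat /IH Hres]] Hroot Hwf.
suff [] : all (fun c => vbl (label c) :&: S != set0) ts' /\ all (wf_tree vbl) ts'.
  exact: Hres.
move: Hat; rewrite /attach; case: ifP => Hc.
  move=> [[[|k p] l] [Hq [_ ->]]]; move: Hq; rewrite mem_filter /= => /andP [He Hq].
    by case: (negP (root_notin_vforest_from 0 ts l) Hq).
  split; last exact: wf_add_forest Hq He Hwf.
  by rewrite (all_label_add_forest (fun l => vbl l :&: S != set0)).
by case: ifP => HS ->; rewrite ?all_rcons ?HS ?Hroot ?Hwf.
Qed.

Lemma process_exists S L (ts : seq (etree m)) : exists res, process vbl S L ts res.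
Proof.
elim: L ts => [|e L IH] ts /=; first by exists ts.
suff [ts' Hat] : exists ts', attach vbl S e ts ts'.
  by have [res Hres] := IH ts'; exists res, ts'.
rewrite /attach /=; case: (boolP (_ != [::])) => Hc.
  have [q Hq Hmax] := exists_argmax (fun q : seq nat * 'I_m => size q.1) Hc.
  by exists (add_forest e q.1 ts), q.
by case: (boolP (_ != set0)); eexists.
Qed.

End WitnessForests.

Local Open Scope ring_scope.

Section AttachedEvents.
Variables (n m : nat) (vbl : 'I_m -> {set 'I_n}).

Lemma attached_subset (S1 S : {set 'I_n}) (X1 X L : seq 'I_m) :
  S1 \subset S -> {subset X1 <= X} ->
  {subset attached vbl S1 X1 L <= attached vbl S X L}.
Proof.
move=> HS; elim: L X1 X => //= e L IH X1 X HX.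
have HXe : {subset e :: X1 <= e :: X}.
  by move=> z; rewrite !inE => /orP [-> | /HX ->]; rewrite ?orbT.
case: ifP => [/orP H1 | _].
  have -> : has (fun l => e \in GammaP vbl l) X || (vbl e :&: S != set0).
    case: H1 => [/hasP [y /HX Hy He] | /(setI_neq0S HS) ->]; last by rewrite orbT.
    by apply/orP; left; apply/hasP; exists y.
  by move=> z; rewrite !inE => /orP [-> // | /(IH _ _ HXe) ->]; rewrite orbT.
case: ifP => _; last exact: IH.
have HX' : {subset X1 <= e :: X} by move=> y /HX Hy; rewrite inE Hy orbT.
by move=> z /(IH _ _ HX') Hz; rewrite inE Hz orbT.
Qed.

Lemma sum_attached_setU (R : numDomainType) (f : 'I_m -> R) (S1 S2 : {set 'I_n})
    (X X1 X2 L : seq 'I_m) :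
  (forall e, 0 <= f e) -> X =i X1 ++ X2 ->
  \sum_(e <- attached vbl (S1 :|: S2) X L) f e <=
  \sum_(e <- attached vbl S1 X1 L) f e + \sum_(e <- attached vbl S2 X2 L) f e.
Proof.
move=> f_ge0; elim: L X X1 X2 => [|e L IH] X X1 X2 HX /=; first by rewrite !big_nil addr0.
rewrite (eq_has_r HX) has_cat setIUr setU_eq0 negb_and orbACA.
have fe := f_ge0 e.
case: (has _ X1 || (vbl e :&: S1 != set0)); case: (has _ X2 || (vbl e :&: S2 != set0)).
all: rewrite /= ?big_cons.
- have HXe : e :: X =i (e :: X1) ++ (e :: X2).
    by move=> z; rewrite !(in_cons, mem_cat, HX); case: (z == e); rewrite ?orbT.
  have := IH _ _ _ HXe; rewrite -(lerD2l (f e)) => /le_trans; apply.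
  by rewrite addrA lerD2l lerDr.
- rewrite -addrA lerD2l; apply: IH.
  by move=> z; rewrite !(in_cons, mem_cat, HX).
- rewrite addrCA lerD2l; apply: IH.
  by move=> z; rewrite !(in_cons, mem_cat, HX) orbCA.
- exact: IH.
Qed.

Lemma GammaP_or_setI_set1 p (a e : 'I_m) : p \in vbl a ->
  (e \in GammaP vbl a) || (vbl e :&: [set p] != set0) = (vbl e :&: vbl a != set0).
Proof.
move=> Hp; rewrite setI_set1_neq0 /GammaP /Gamma !inE.
have [-> | Hne] /= := altP (e =P a); first by apply/esym/set0Pn; exists p; rewrite inE Hp.
rewrite setIC; apply/orP/idP => [[] // He | ->]; last by left.
by apply/set0Pn; exists p; rewrite inE He Hp.
Qed.

Lemma attached_set1_cons p a (X L : seq 'I_m) : p \in vbl a ->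
  attached vbl [set p] (a :: X) L = attached vbl (vbl a) X L.
Proof.
move=> Hp; elim: L X => //= e L IH X.
rewrite -orbA (orbC (has _ X)) orbA GammaP_or_setI_set1 // (orbC _ (has _ X)).
case: ifP => _; last exact: IH.
by congr (_ :: _); rewrite -IH; apply: eq_attached => z; rewrite !inE orbCA.
Qed.

End AttachedEvents.

Section EventLog.
Variables (n m : nat) (vbl : 'I_m -> {set 'I_n}) (C : nat -> option 'I_m).

Definition log_before (t : nat) : seq 'I_m := pmap C (rev (iota 1 t.-1)).

Lemma log_before_succ t :
  log_before t.+2 = oapp (cons^~ (log_before t.+1)) (log_before t.+1) (C t.+1).
Proof.
rewrite /log_before (_ : t.+2.-1 = t + 1)%N; last by rewrite addn1.
by rewrite iotaD rev_cat add1n.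
Qed.

Lemma attached_set1_log p t :
  attached vbl [set p] [::] (log_before t) = [::] \/
  exists t' a, [/\ (t' < t)%N, C t' = Some a, p \in vbl a &
    attached vbl [set p] [::] (log_before t) = a :: attached vbl (vbl a) [::] (log_before t')].
Proof.
case: t => [|t]; first by left.
elim: t => [|t IH]; first by left.
have Hlog := log_before_succ t; case HC: (C t.+1) => [a|] in Hlog; rewrite /= in Hlog.
  rewrite Hlog /= setI_set1_neq0; case Hp: (p \in vbl a).
    by right; exists t.+1, a; rewrite ltnSn attached_set1_cons.
  case: IH => [-> | [t' [a' [Ht HC' Hp' HL]]]]; first by left.
  by right; exists t', a'; rewrite ltnW.
rewrite Hlog; case: IH => [-> | [t' [a' [Ht HC' Hp' HL]]]]; first by left.
by right; exists t', a'; rewrite ltnW.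
Qed.

End EventLog.

Section Weights.
Variables (R : realType) (n m : nat) (vbl : 'I_m -> {set 'I_n}) (x : 'I_m -> R).

Lemma ln2_gt0 : 0 < ln (2 : R).
Proof. by apply: ln_gt0; rewrite ltr1n. Qed.

Lemma ler_log2 (a b : R) : 0 < a -> a <= b -> log2 a <= log2 b.
Proof.
move=> a_gt0 ab; rewrite /log2 ler_pM2r ?invr_gt0 ?ln2_gt0 //.
by rewrite ler_ln // posrE (lt_le_trans a_gt0 ab).
Qed.

Lemma log2_ge0 (a : R) : 1 <= a -> 0 <= log2 a.
Proof. by move=> a_ge1; rewrite /log2 divr_ge0 ?ln_ge0 // ler1n. Qed.

Lemma log2_Mconst_ge0 : (0 < m)%N -> 0 <= log2 (Mconst vbl x).
Proof.
move=> m_gt0; apply: log2_ge0; rewrite !le_max; apply/orP; left; apply/orP; right.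
by rewrite ler1n muln_gt0.
Qed.

Hypothesis x01 : forall i, 0 < x i < 1.

Lemma xp_gt0 i : 0 < xp vbl x i.
Proof.
have [xi_gt0 _] := andP (x01 i).
by rewrite mulr_gt0 // prodr_gt0 // => j _; rewrite subr_gt0; case/andP: (x01 j).
Qed.

Lemma xp_le1 i : xp vbl x i <= 1.
Proof.
have [xi_gt0 xi_lt1] := andP (x01 i).
apply: mulr_ile1; [exact: ltW xi_gt0 | | exact: ltW xi_lt1 |].
  by apply: prodr_ge0 => j _; rewrite subr_ge0; case/andP: (x01 j) => _ /ltW.
apply: prodr_ile1 => j _; case/andP: (x01 j) => xj_gt0 xj_lt1.
by rewrite subr_ge0 ltW //= lerBlDr lerDl ltW.
Qed.

Lemma wgtE i : wgt vbl x i = log2 (xp vbl x i)^-1.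
Proof. by rewrite /wgt /log2 lnV ?posrE ?xp_gt0 // mulNr. Qed.

Lemma wgt_ge0 i : 0 <= wgt vbl x i.
Proof. by rewrite wgtE log2_ge0 // invf_ge1 ?xp_gt0 ?xp_le1. Qed.

Lemma wgt_le_log2_Mconst i : in_bar vbl x i -> wgt vbl x i <= log2 (Mconst vbl x).
Proof.
have m_gt0 : (0 < m)%N by apply: leq_ltn_trans (ltn_ord i).
rewrite /in_bar wgtE => Hbar; apply: ler_log2; first by rewrite invr_gt0 xp_gt0.
rewrite !le_max; apply/orP; left; apply/orP; right.
by rewrite -[X in _ <= X]invrK lef_pV2 ?posrE ?xp_gt0 ?invr_gt0 ?ltr0n ?muln_gt0.
Qed.

End Weights.

Lemma blabels_subtree n (b0 : btree n) S : S \in blabels b0 ->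
  exists2 b, blabel b = S & {subset blabels b <= blabels b0}.
Proof.
elim: b0 => [p | l IHl r IHr] /=; first by rewrite inE => /eqP ->; exists (BLeaf p).
rewrite inE mem_cat => /orP [/eqP -> | /orP [/IHl | /IHr] [b Hb Hsub]].
- by exists (BNode l r).
- by exists b => // z /Hsub Hz; rewrite inE mem_cat Hz orbT.
- by exists b => // z /Hsub Hz; rewrite inE mem_cat Hz !orbT.
Qed.

Section HeavyWitness.
Variables (R : realFieldType) (n m : nat) (vbl : 'I_m -> {set 'I_n}) (Bt : 'I_m -> btree n).
Variables (C : nat -> option 'I_m) (w : 'I_m -> R) (gamma : R) (bar : pred 'I_m).
Hypotheses (w_ge0 : forall e, 0 <= w e) (w_bar : forall e, bar e -> w e <= gamma).
Hypotheses (gamma_ge0 : 0 <= gamma) (blabel_Bt : forall i, blabel (Bt i) = vbl i).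

Definition witness_labels t S := attached vbl S [::] (log_before C t).

Definition witness_weight t S := \sum_(e <- witness_labels t S) w e.

Lemma heavy_witness t a b : C t = Some a -> {subset blabels b <= blabels (Bt a)} ->
  gamma <= witness_weight t (blabel b) -> all bar (witness_labels t (blabel b)) ->
  exists t' a' S, [/\ C t' = Some a', S \in blabels (Bt a') &
                      gamma <= witness_weight t' S <= 2 * gamma].
Proof.
elim/ltn_ind: t a b => t IHt a b HC.
have found b' : {subset blabels b' <= blabels (Bt a)} ->
    gamma <= witness_weight t (blabel b') <= 2 * gamma ->
    exists t' a' S, [/\ C t' = Some a', S \in blabels (Bt a') &
                       gamma <= witness_weight t' S <= 2 * gamma].
  move=> Hsub HW; exists t, a, (blabel b'); split => //.
  by apply: Hsub; case: b' {HW} => *; exact: mem_head.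
elim: b => [p | l IHl r IHr] Hsub HW Hbar.
- have [HW2 | HW2] := lerP (witness_weight t [set p]) (2 * gamma).
    by apply: (found (BLeaf p)) => //; apply/andP; split.
  case: (attached_set1_log vbl C p t) => [Hnil | [t' [a' [Ht' HC' Hp Hcons]]]].
    exfalso; move: HW2 gamma_ge0.
    by rewrite /witness_weight /witness_labels /= Hnil big_nil; lra.
  move: HW2 Hbar; rewrite /witness_weight /witness_labels /= Hcons big_cons /=.
  move=> HW2 /andP [/w_bar Ha' Hbar'].
  apply: (IHt t' Ht' a' (Bt a')) => //; rewrite /witness_weight blabel_Bt //; lra.
- have [HW2 | HW2] := lerP (witness_weight t (blabel l :|: blabel r)) (2 * gamma).
    by apply: (found (BNode l r)) => //; apply/andP; split.
  have Hsplit : witness_weight t (blabel l :|: blabel r) <=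
      witness_weight t (blabel l) + witness_weight t (blabel r).
    exact: sum_attached_setU.
  have sub_bar (S : {set 'I_n}) :
      S \subset blabel l :|: blabel r -> all bar (witness_labels t S).
    by move=> HS; apply/allP => z /(attached_subset HS (fun _ h => h)) /(allP Hbar).
  have [Hl | Hl] := lerP gamma (witness_weight t (blabel l)).
    apply: IHl => [z Hz | //|]; last exact/sub_bar/subsetUl.
    by apply: Hsub; rewrite /= inE mem_cat Hz orbT.
  have [Hr | Hr] := lerP gamma (witness_weight t (blabel r)).
    apply: IHr => [z Hz | //|]; last exact/sub_bar/subsetUr.
    by apply: Hsub; rewrite /= inE mem_cat Hz !orbT.
  by exfalso; move: Hsplit HW2; rewrite /=; lra.
Qed.

End HeavyWitness.

Section ProcessWeight.
Variables (R : realType) (n m : nat) (vbl : 'I_m -> {set 'I_n}) (x : 'I_m -> R).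
Variables (S : {set 'I_n}) (L : seq 'I_m) (res : seq (etree m)).
Hypothesis process_res : process vbl S L [::] res.

Lemma weight_process : weight vbl x (S, res) = \sum_(e <- attached vbl S [::] L) wgt vbl x e.
Proof.
rewrite /weight -(big_map snd xpredT (wgt vbl x)).
exact: perm_big (perm_process_labels process_res).
Qed.

Lemma all_bar_process : all_bar vbl x (S, res) = all (in_bar vbl x) (attached vbl S [::] L).
Proof.
rewrite /all_bar -(all_map snd (in_bar vbl x)).
exact: perm_all (perm_process_labels process_res).
Qed.

End ProcessWeight.

Theorem lemma3p2 (R : realType) (n m : nat) (D : 'I_n -> finType)
  (A : 'I_m -> (forall p, D p) -> bool) (vbl : 'I_m -> {set 'I_n})
  (Bt : 'I_m -> btree n) (x : 'I_m -> R) (eps : R)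
  (T : forall p : 'I_n, nat -> D p) (rule : ('I_n -> nat) -> option 'I_m) :
  (forall i j, A i =1 A j -> i = j) ->
  (forall i, is_vbl A vbl i) ->
  (forall i, bvalid (Bt i) /\ blabel (Bt i) = vbl i) ->
  0 < eps < 1 ->
  (forall i, 0 < x i < 1) ->
  rule_spec A T rule ->
  let C := event_log vbl rule in
  let gamma := log2 (Mconst vbl x) / eps in
  (exists tau : pwt n m, is_pwt vbl Bt tau /\ occurs vbl Bt C tau /\
      gamma <= weight vbl x tau /\ all_bar vbl x tau) ->
  exists tau : pwt n m, is_pwt vbl Bt tau /\ occurs vbl Bt C tau /\
      gamma <= weight vbl x tau <= 2 * gamma.
Proof.
move=> _ _ HBt /andP [eps_gt0 eps_lt1] x01 _ C gamma.
move=> [[S ts] [_ [[t [a [HC [HS Hproc]]]] [Hw Hbar]]]] /=.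
have [b HbS Hsub] := blabels_subtree HS.
have log2M_ge0 : 0 <= log2 (Mconst vbl x).
  by apply/log2_Mconst_ge0/(leq_ltn_trans _ (ltn_ord a)).
have log2M_le : log2 (Mconst vbl x) <= gamma.
  by rewrite ler_pdivlMr // ler_piMr // ltW.
have [t' [a' [S' [HC' HS' Hw']]]] :
    exists t' a' S', [/\ C t' = Some a', S' \in blabels (Bt a') &
      gamma <= witness_weight vbl C (wgt vbl x) t' S' <= 2 * gamma].
  apply: (heavy_witness (bar := in_bar vbl x)) HC Hsub _ _ => //.
  - exact: wgt_ge0.
  - by move=> e /(wgt_le_log2_Mconst x01) /le_trans; apply.
  - exact: le_trans log2M_ge0 log2M_le.
  - by move=> i; case: (HBt i).
  - by rewrite /witness_weight /witness_labels HbS -(weight_process x Hproc).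
  - by rewrite /witness_labels HbS -(all_bar_process x Hproc).
have [res Hres] := process_exists vbl S' (log_before C t') [::].
exists (S', res); split; last split.
- by split; [exists a' | have [] := process_wf Hres].
- by exists t', a'.
- by rewrite (weight_process x Hres).
Qed.
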